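(* For $t\in(0,1)$ and $n\ge1$ the recurrence coefficients satisfy $$(2n+2+\alpha+\beta)\alpha_n=2tr_n-2y_n-\beta+(2n+1+\alpha+\beta)t+(1-t)x_n=2\mathsf p_1(n,t)-\beta+(2n+1+\alpha+\beta)t+(1-t)x_n,$$ and $$\begin{aligned}(2n-1+\alpha+\beta)(2n+1+\alpha+\beta)\beta_n&=(y_n-tr_n)^2+(2n+\alpha)tr_n+[\beta-(2n+\alpha+\beta)t]y_n+n(n+\alpha)t\\&=\mathsf p_1(n,t)^2+(2n+\alpha)\mathsf p_1(n,t)+(2n+\alpha+\beta)(1-t)y_n+n(n+\alpha)t\\&=\mathsf p_1(n,t)^2+[-\beta+(2n+\alpha+\beta)t]\mathsf p_1(n,t)+(2n+\alpha+\beta)t(1-t)\mathsf p_1'(n,t)+n(n+\alpha)t.\end{aligned}$$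
   Context: Fix $\alpha>0$, $\beta>0$, and real $A,B$ with $A\ge0$, $A+B\ge0$, not both zero; $\theta$ is the Heaviside step function. For $t\in(0,1)$ let $w(x;t)=x^\alpha(1-x)^\beta(A+B\theta(x-t))$ on $[0,1]$, and let $P_n(x)=P_n(x;t)=x^n+\mathsf p_1(n,t)x^{n-1}+\cdots$ be the monic orthogonal polynomials: $\int_0^1P_iP_jw\,dx=h_i(t)\delta_{ij}$, $h_i>0$, satisfying $xP_n=P_{n+1}+\alpha_nP_n+\beta_nP_{n-1}$, $P_{-1}=0$, $\beta_n=h_n/h_{n-1}$, $\mathsf p_1(0,t)=0$. Define $R_n(t)=B\,t^\alpha(1-t)^\beta P_n(t;t)^2/h_n$, $r_n(t)=B\,t^\alpha(1-t)^\beta P_n(t;t)P_{n-1}(t;t)/h_{n-1}$ ($r_0=0$), $x_n(t)=\frac{\beta}{h_n}\int_0^1\frac{P_n(y)^2}{1-y}\,y^\alpha(1-y)^\beta(A+B\theta(y-t))\,dy$, $y_n(t)=\frac{\beta}{h_{n-1}}\int_0^1\frac{P_n(y)P_{n-1}(y)}{1-y}\,y^\alpha(1-y)^\beta(A+B\theta(y-t))\,dy$ ($y_0=0$). A prime denotes $d/dt$. *)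

From Stdlib Require Import Reals Lra.
Open Scope R_scope.

(* Heaviside step function (value at 0 is irrelevant for all integrals). *)
Definition heav (x : R) : R := if Rlt_dec x 0 then 0 else 1.

(* Real power x^a for x >= 0, with 0^a = 0 (a > 0). *)
Definition powr (x a : R) : R := if Rle_dec x 0 then 0 else Rpower x a.

Definition weight (al be A B t x : R) : R :=
  powr x al * powr (1 - x) be * (A + B * heav (x - t)).

Definition polyP (c : nat -> nat -> R -> R) (n : nat) (t x : R) : R :=
  sum_f_R0 (fun k => c n k t * x ^ k) n.

(* (Possibly improper at 1) Riemann integral over [0,1]:
   int_0^1 f = lim_{b -> 1^-} int_0^b f. For bounded Riemann integrable f it
   coincides with the ordinary integral. *)
Definition int01 (f : R -> R) (l : R) : Prop :=
  (forall b, 0 < b < 1 -> inhabited (Riemann_integrable f 0 b)) /\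
  (forall eps, eps > 0 -> exists delta, delta > 0 /\
     forall b (pr : Riemann_integrable f 0 b),
       1 - delta < b < 1 -> Rabs (RiemannInt pr - l) < eps).

(* The recurrence coefficients can be read off the monic polynomials: [alpha_n] is the drop
   [p1(n) - p1(n+1)] of subleading coefficients and [beta_n = h_n / h_(n-1)].  The Jacobi part
   of the weight satisfies a Pearson equation, so integrating by parts against the weight, which
   jumps by [B] at [t], expresses the orthogonality integrals of [(x (1-x) u)'] for
   [u = P_n^2, P_n P_(n-1)] through [R_n], [r_n]; comparing with their values computed by
   orthogonality gives linear relations between [p1], [p2], [alpha_n], [beta_n], [x_n], [y_n].
   Evaluating the three-term recurrence at [x = t] links [R_n] and [r_n], and an induction on [n]
   combining these relations gives the third formula for [beta_n].  Finally, moving [t] to [s]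
   changes the weight only by [B x^al (1-x)^be] on [(t, s)], which yields [p1'(n, t) = r_n]. *)

From Stdlib Require Import Reals Lra Lia Psatz FunctionalExtensionality.
Open Scope R_scope.

Lemma exists_pos_below3 d1 d2 d3 : 0 < d1 -> 0 < d2 -> 0 < d3 ->
  exists d, 0 < d /\ d <= d1 /\ d <= d2 /\ d <= d3.
Proof.
  intros H1 H2 H3. exists (Rmin (Rmin d1 d2) d3).
  assert (Rmin d1 d2 <= d1 /\ Rmin d1 d2 <= d2) by (split; [apply Rmin_l| apply Rmin_r]).
  assert (Rmin (Rmin d1 d2) d3 <= Rmin d1 d2 /\ Rmin (Rmin d1 d2) d3 <= d3)
    by (split; [apply Rmin_l| apply Rmin_r]).
  repeat split; try lra. repeat apply Rmin_glb_lt; lra.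
Qed.

Lemma int01_unique f a b : int01 f a -> int01 f b -> a = b.
Proof.
  intros [Hi Hc1] [_ Hc2].
  apply cond_eq; intros eps Heps.
  destruct (Hc1 (eps / 2) ltac:(lra)) as [d1 [Hd1 H1]].
  destruct (Hc2 (eps / 2) ltac:(lra)) as [d2 [Hd2 H2]].
  destruct (exists_pos_below3 d1 d2 1) as [d Hd]; try lra.
  destruct (Hi (1 - d / 2) ltac:(lra)) as [pr].
  assert (X1 := H1 _ pr ltac:(lra)). assert (X2 := H2 _ pr ltac:(lra)).
  replace (a - b) with ((RiemannInt pr - b) - (RiemannInt pr - a)) by ring.
  eapply Rle_lt_trans; [apply Rabs_triang|]. rewrite Rabs_Ropp. lra.
Qed.

Lemma int01_ext f g a : (forall x, 0 <= x < 1 -> f x = g x) -> int01 f a -> int01 g a.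
Proof.
  intros Heq [Hi Hc]. split.
  - intros b Hb. destruct (Hi b Hb) as [p]. constructor.
    apply Riemann_integrable_ext with f; [|exact p].
    intros x Hx. apply Heq. rewrite Rmin_left, Rmax_right in Hx by lra. lra.
  - intros eps Heps. destruct (Hc eps Heps) as [d [Hd H]].
    destruct (exists_pos_below3 d 1 1) as [d' Hd']; try lra.
    exists d'. split; [lra|]. intros b pr Hb.
    destruct (Hi b ltac:(lra)) as [p].
    rewrite <- (RiemannInt_P18 p pr); [apply H; lra| lra|].
    intros x Hx. apply Heq. lra.
Qed.

Lemma int01_lin f g a b l : int01 f a -> int01 g b ->
  int01 (fun x => f x + l * g x) (a + l * b).
Proof.
  intros [Hi1 Hc1] [Hi2 Hc2]. split.
  - intros b' Hb. destruct (Hi1 b' Hb) as [p1]; destruct (Hi2 b' Hb) as [p2].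
    constructor. apply RiemannInt_P10; assumption.
  - intros eps Heps.
    assert (Hl : 0 < 1 + Rabs l) by (generalize (Rabs_pos l); lra).
    set (e := eps / (2 * (1 + Rabs l))).
    assert (He : e > 0) by (unfold e; apply Rdiv_lt_0_compat; lra).
    destruct (Hc1 e He) as [d1 [Hd1 H1]].
    destruct (Hc2 e He) as [d2 [Hd2 H2]].
    destruct (exists_pos_below3 d1 d2 1) as [d Hd]; try lra.
    exists d. split; [lra|]. intros b' pr Hb.
    destruct (Hi1 b' ltac:(lra)) as [p1]; destruct (Hi2 b' ltac:(lra)) as [p2].
    rewrite (RiemannInt_P13 p1 p2 pr).
    assert (X1 := H1 b' p1 ltac:(lra)). assert (X2 := H2 b' p2 ltac:(lra)).
    replace (RiemannInt p1 + l * RiemannInt p2 - (a + l * b)) with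
      ((RiemannInt p1 - a) + l * (RiemannInt p2 - b)) by ring.
    eapply Rle_lt_trans; [apply Rabs_triang|]. rewrite Rabs_mult.
    assert (Rabs l * Rabs (RiemannInt p2 - b) <= Rabs l * e)
      by (apply Rmult_le_compat_l; [apply Rabs_pos| lra]).
    assert (e * (2 * (1 + Rabs l)) = eps) by (unfold e; field; lra).
    generalize (Rabs_pos l); nra.
Qed.

Lemma int01_zero : int01 (fun _ => 0) 0.
Proof.
  split.
  - intros. constructor. apply Riemann_integrable_ext with (fct_cte 0).
    + reflexivity.
    + apply RiemannInt_P14.
  - intros eps Heps. exists 1. split; [lra|]. intros b pr Hb.
    rewrite (RiemannInt_P18 pr (RiemannInt_P14 0 b 0)) by (lra || reflexivity).
    rewrite RiemannInt_P15, Rminus_0_r, Rmult_0_l, Rabs_R0. lra.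
Qed.

Lemma int01_scal f a l : int01 f a -> int01 (fun x => l * f x) (l * a).
Proof.
  intros H. eapply int01_ext; [|rewrite <- (Rplus_0_l (l * a)); exact (int01_lin _ _ _ _ l int01_zero H)].
  intros; simpl; ring.
Qed.

Lemma int01_add f g a b : int01 f a -> int01 g b -> int01 (fun x => f x + g x) (a + b).
Proof.
  intros H1 H2. eapply int01_ext; [|rewrite <- (Rmult_1_l b); exact (int01_lin _ _ _ _ 1 H1 H2)].
  intros; simpl; ring.
Qed.

Lemma int01_sub f g a b : int01 f a -> int01 g b -> int01 (fun x => f x - g x) (a - b).
Proof.
  intros H1 H2. eapply int01_ext.
  2: replace (a - b) with (a + (-1) * b) by ring; exact (int01_lin _ _ _ _ (-1) H1 H2).
  intros; simpl; ring.
Qed.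

Lemma int01_sum (F : nat -> R -> R) (v : nat -> R) m :
  (forall k, (k <= m)%nat -> int01 (F k) (v k)) ->
  int01 (fun x => sum_f_R0 (fun k => F k x) m) (sum_f_R0 v m).
Proof.
  induction m; intros H; simpl.
  - apply H. lia.
  - apply int01_add; [apply IHm; intros; apply H| apply H]; lia.
Qed.

(* Polynomials are handled through coefficient sequences: [pshift a] and [pxderiv a] are the
   coefficients of [x p(x)] and [x p'(x)] when [a] are those of [p]. *)
Definition peval (m : nat) (a : nat -> R) (x : R) : R := sum_f_R0 (fun k => a k * x ^ k) m.
Definition pderiv (m : nat) (a : nat -> R) (x : R) : R :=
  sum_f_R0 (fun k => INR k * a k * x ^ (pred k)) m.
Definition pshift (a : nat -> R) (k : nat) : R := match k with O => 0 | S k' => a k' end.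
Definition pxderiv (a : nat -> R) (k : nat) : R := INR k * a k.

Lemma peval_S m a x : peval (S m) a x = peval m a x + a (S m) * x ^ (S m).
Proof. reflexivity. Qed.

Lemma peval_ext m a b x : (forall k, (k <= m)%nat -> a k = b k) -> peval m a x = peval m b x.
Proof. intros H; unfold peval; apply sum_eq; intros; rewrite H; auto. Qed.

Lemma peval_lin4 m a1 a2 a3 a4 l1 l2 l3 l4 x :
  peval m (fun k => l1 * a1 k + l2 * a2 k + l3 * a3 k + l4 * a4 k) x =
  l1 * peval m a1 x + l2 * peval m a2 x + l3 * peval m a3 x + l4 * peval m a4 x.
Proof. unfold peval. induction m; simpl; [ring|]. rewrite IHm. ring. Qed.

Lemma peval_sub m a b x : peval m (fun k => a k - b k) x = peval m a x - peval m b x.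
Proof. unfold peval. induction m; simpl; [ring|]. rewrite IHm. ring. Qed.

Lemma peval_pshift m a x : peval (S m) (pshift a) x = x * peval m a x.
Proof.
  unfold peval. induction m; [simpl; ring|].
  rewrite tech5, IHm. simpl. ring.
Qed.

Lemma peval_S_top0 m a x : a (S m) = 0 -> peval (S m) a x = peval m a x.
Proof. intros H. rewrite peval_S, H. ring. Qed.

Lemma peval_pad m m' a x : (m <= m')%nat ->
  (forall k, (m < k)%nat -> (k <= m')%nat -> a k = 0) -> peval m' a x = peval m a x.
Proof.
  intros Hm H. induction m' as [|m' IH].
  - f_equal. lia.
  - destruct (Nat.eq_dec m (S m')) as [<-|Hne]; [reflexivity|].
    rewrite peval_S_top0 by (apply H; lia). apply IH; [lia|]. intros; apply H; lia.
Qed.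

Lemma peval_derivable m a x : derivable_pt_lim (peval m a) x (pderiv m a x).
Proof.
  induction m.
  - unfold peval, pderiv; simpl. replace (0 * a 0%nat * 1) with 0 by ring.
    apply derivable_pt_lim_const.
  - replace (peval (S m) a) with (fun y => peval m a y + a (S m) * y ^ S m)
      by (apply functional_extensionality; reflexivity).
    unfold pderiv at 1; rewrite tech5; fold (pderiv m a x).
    apply (derivable_pt_lim_plus (peval m a) (fun y => a (S m) * y ^ S m)); [exact IHm|].
    replace (INR (S m) * a (S m) * x ^ pred (S m))
      with (a (S m) * (INR (S m) * x ^ pred (S m))) by ring.
    apply (derivable_pt_lim_scal (fun y => y ^ S m)), derivable_pt_lim_pow.
Qed.


Lemma pderiv_cont m a x : continuity_pt (pderiv m a) x.
Proof.
  unfold pderiv. induction m; simpl.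
  - apply continuity_pt_const. intros u v; reflexivity.
  - apply (continuity_pt_plus (fun y => sum_f_R0 (fun k => INR k * a k * y ^ pred k) m)
             (fun y => INR (S m) * a (S m) * y ^ m)); [exact IHm|].
    apply (continuity_pt_scal (fun y => y ^ m)), derivable_continuous_pt.
    exists (INR m * x ^ pred m). apply derivable_pt_lim_pow.
Qed.

Lemma pderiv_pxderiv m a x : x * pderiv m a x = peval m (pxderiv a) x.
Proof.
  unfold pderiv, peval, pxderiv. rewrite scal_sum. apply sum_eq. intros k _.
  destruct k; simpl; ring.
Qed.

Lemma sum_f_R0_swap (F : nat -> nat -> R) m1 m2 :
  sum_f_R0 (fun k => sum_f_R0 (fun j => F j k) m2) m1 =
  sum_f_R0 (fun j => sum_f_R0 (fun k => F j k) m1) m2.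
Proof.
  induction m1; [reflexivity|].
  simpl. rewrite IHm1, <- sum_plus. reflexivity.
Qed.

Lemma sum_f_R0_kronecker (b : nat -> R) (v : R) m i :
  sum_f_R0 (fun j => b j * (if Nat.eqb j i then v else 0)) m =
  if Nat.leb i m then b i * v else 0.
Proof.
  induction m.
  - destruct i; simpl; ring.
  - rewrite tech5, IHm. destruct (Nat.eqb_spec (S m) i) as [<-|].
    + rewrite Nat.leb_refl. replace (Nat.leb (S m) m) with false
        by (symmetry; apply Nat.leb_gt; lia). ring.
    + destruct (Nat.leb_spec i m); destruct (Nat.leb_spec i (S m)); try lia; ring.
Qed.

Lemma peval_abs_le m a x : Rabs x <= 1 -> Rabs (peval m a x) <= sum_f_R0 (fun k => Rabs (a k)) m.
Proof.
  intros Hx. unfold peval. eapply Rle_trans; [apply Rsum_abs|]. apply sum_Rle. intros k _.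
  rewrite Rabs_mult, <- RPow_abs. rewrite <- (Rmult_1_r (Rabs (a k))) at 2.
  apply Rmult_le_compat_l; [apply Rabs_pos|].
  rewrite <- (pow1 k). apply pow_incr. split; [apply Rabs_pos| auto].
Qed.

Lemma sum_abs_nonneg (a : nat -> R) m : 0 <= sum_f_R0 (fun k => Rabs (a k)) m.
Proof. apply cond_pos_sum. intros; apply Rabs_pos. Qed.

Lemma abs_le_sum_abs (a : nat -> R) m k : (k <= m)%nat ->
  Rabs (a k) <= sum_f_R0 (fun k => Rabs (a k)) m.
Proof.
  induction m; intros Hk.
  - replace k with 0%nat by lia. simpl. lra.
  - rewrite tech5. destruct (Nat.eq_dec k (S m)) as [->|].
    + generalize (sum_abs_nonneg a m). lra.
    + generalize (IHm ltac:(lia)) (Rabs_pos (a (S m))). lra.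
Qed.

Section MonicFamily.
Variable c : nat -> nat -> R -> R.
Variable s : R.
Hypothesis hmonic : forall n s, c n n s = 1.

Definition coef (i k : nat) : R := if Nat.leb k i then c i k s else 0.

Lemma coef_diag i : coef i i = 1.
Proof. unfold coef. rewrite Nat.leb_refl. apply hmonic. Qed.
Lemma coef_above i k : (i < k)%nat -> coef i k = 0.
Proof. intros H. unfold coef. destruct (Nat.leb_spec k i); [lia|reflexivity]. Qed.
Lemma coef_below i k : (k <= i)%nat -> coef i k = c i k s.
Proof. intros H. unfold coef. destruct (Nat.leb_spec k i); [reflexivity|lia]. Qed.

Lemma polyP_peval i x : polyP c i s x = peval i (coef i) x.
Proof. unfold polyP, peval. apply sum_eq. intros k Hk. rewrite coef_below; auto. Qed.

Lemma peval_coef i m x : (i <= m)%nat -> peval m (coef i) x = polyP c i s x.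
Proof. intros H. rewrite polyP_peval. apply peval_pad; auto. intros; apply coef_above; lia. Qed.

Lemma polyP_derivable i x : derivable_pt_lim (polyP c i s) x (pderiv i (coef i) x).
Proof.
  replace (polyP c i s) with (peval i (coef i)) by
    (apply functional_extensionality; intros; symmetry; apply polyP_peval).
  apply peval_derivable.
Qed.

Lemma polyP_cont i x : continuity_pt (polyP c i s) x.
Proof. apply derivable_continuous_pt. eexists. apply polyP_derivable. Qed.

Lemma sum_coef_diag (b : nat -> R) k : sum_f_R0 (fun j => b j * coef j k) k = b k.
Proof.
  destruct k; simpl; [rewrite coef_diag; ring|].
  rewrite sum_eq_R0; [rewrite coef_diag; ring|].
  intros j Hj. rewrite coef_above by lia. ring.
Qed.

(* The coefficient vectors of P_0, ..., P_m form a unitriangular basis. *)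
Lemma coef_span m (a : nat -> R) : exists b : nat -> R,
  forall k, (k <= m)%nat -> a k = sum_f_R0 (fun j => b j * coef j k) m.
Proof.
  revert a. induction m; intros a.
  - exists (fun _ => a 0%nat). intros k Hk. replace k with 0%nat by lia.
    simpl. rewrite coef_diag. ring.
  - destruct (IHm (fun k => a k - a (S m) * coef (S m) k)) as [b Hb].
    exists (fun j => if Nat.eqb j (S m) then a (S m) else b j).
    intros k Hk. rewrite tech5, Nat.eqb_refl.
    rewrite (sum_eq _ (fun j => b j * coef j k)).
    2:{ intros j Hj. destruct (Nat.eqb_spec j (S m)); [lia|reflexivity]. }
    destruct (Nat.eq_dec k (S m)) as [->|].
    + rewrite sum_eq_R0, coef_diag; [ring|].
      intros j Hj. rewrite coef_above by lia. ring.
    + rewrite <- Hb by lia. ring.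
Qed.

Lemma peval_span m a b : (forall k, (k <= m)%nat -> a k = sum_f_R0 (fun j => b j * coef j k) m) ->
  forall x, peval m a x = sum_f_R0 (fun j => b j * polyP c j s x) m.
Proof.
  intros Hb x. unfold peval.
  rewrite (sum_eq _ (fun k => sum_f_R0 (fun j => b j * coef j k * x ^ k) m)).
  2:{ intros k Hk. rewrite Hb, Rmult_comm, scal_sum by auto. apply sum_eq. intros; ring. }
  rewrite sum_f_R0_swap. apply sum_eq. intros j Hj.
  rewrite <- (peval_coef j m) by auto. unfold peval. rewrite scal_sum.
  apply sum_eq. intros; ring.
Qed.

End MonicFamily.

Definition wint (w f : R -> R) (v : R) : Prop := int01 (fun x => f x * w x) v.

Section WeightedIntegral.
Variable w : R -> R.

Lemma wint_ext f g v : (forall x, 0 <= x < 1 -> f x = g x) -> wint w f v -> wint w g v.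
Proof. intros H; apply int01_ext. intros x Hx; rewrite H; auto. Qed.

Lemma wint_eq f g v v' : wint w f v -> v = v' -> (forall x, 0 <= x < 1 -> f x = g x) ->
  wint w g v'.
Proof. intros H -> E. exact (wint_ext f g _ E H). Qed.

Lemma wint_scal f a l : wint w f a -> wint w (fun x => l * f x) (l * a).
Proof. intros H. eapply int01_ext; [|exact (int01_scal _ _ l H)]. intros; simpl; ring. Qed.

Lemma wint_add f g a b : wint w f a -> wint w g b -> wint w (fun x => f x + g x) (a + b).
Proof. intros H1 H2. eapply int01_ext; [|exact (int01_add _ _ _ _ H1 H2)]. intros; simpl; ring. Qed.

Lemma wint_sub f g a b : wint w f a -> wint w g b -> wint w (fun x => f x - g x) (a - b).
Proof. intros H1 H2. eapply int01_ext; [|exact (int01_sub _ _ _ _ H1 H2)]. intros; simpl; ring. Qed.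

Lemma wint_sum (F : nat -> R -> R) (v : nat -> R) m :
  (forall k, (k <= m)%nat -> wint w (F k) (v k)) ->
  wint w (fun x => sum_f_R0 (fun k => F k x) m) (sum_f_R0 v m).
Proof.
  intros H. eapply int01_ext; [|apply int01_sum; exact H].
  intros x _. simpl. rewrite Rmult_comm, scal_sum. apply sum_eq. intros; ring.
Qed.

End WeightedIntegral.

Section Orthogonality.
Variable w : R -> R.
Variable c : nat -> nat -> R -> R.
Variable h : nat -> R -> R.
Variable s : R.
Hypothesis hmonic : forall n s, c n n s = 1.
Hypothesis horth : forall i j : nat, i <> j ->
  int01 (fun x => polyP c i s x * polyP c j s x * w x) 0.
Hypothesis hh : forall i : nat, int01 (fun x => polyP c i s x ^ 2 * w x) (h i s).

Local Notation P i := (polyP c i s).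

Lemma wint_PP j i : wint w (fun x => P j x * P i x) (if Nat.eqb j i then h i s else 0).
Proof.
  destruct (Nat.eqb_spec j i) as [<-|].
  - eapply int01_ext; [|apply hh]. intros; cbv beta; ring.
  - apply horth; auto.
Qed.

Lemma wint_comb_P m (b : nat -> R) i :
  wint w (fun x => sum_f_R0 (fun j => b j * P j x) m * P i x)
    (if Nat.leb i m then b i * h i s else 0).
Proof.
  rewrite <- sum_f_R0_kronecker.
  eapply wint_ext; [|apply wint_sum; intros k _; apply wint_scal, wint_PP].
  intros x _. simpl. rewrite Rmult_comm, scal_sum. apply sum_eq. intros; ring.
Qed.

Lemma wint_peval_P m a b i :
  (forall k, (k <= m)%nat -> a k = sum_f_R0 (fun j => b j * coef c s j k) m) ->
  wint w (fun x => peval m a x * P i x) (if Nat.leb i m then b i * h i s else 0).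
Proof.
  intros Hb. eapply wint_ext; [|apply wint_comb_P].
  intros x _. rewrite (peval_span c s m a b Hb x). reflexivity.
Qed.

Lemma wint_lower_orth m a i : (m < i)%nat -> wint w (fun x => peval m a x * P i x) 0.
Proof.
  intros Hmi. destruct (coef_span c s hmonic m a) as [b Hb].
  eapply wint_eq; [exact (wint_peval_P m a b i Hb)| |reflexivity].
  destruct (Nat.leb_spec i m); [lia|reflexivity].
Qed.

Lemma wint_top i a : wint w (fun x => peval i a x * P i x) (a i * h i s).
Proof.
  destruct (coef_span c s hmonic i a) as [b Hb].
  eapply wint_eq; [exact (wint_peval_P i a b i Hb)| |reflexivity].
  rewrite Nat.leb_refl, Hb, sum_coef_diag by auto. reflexivity.
Qed.

Lemma wint_top1 i a : wint w (fun x => peval (S i) a x * P i x)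
  ((a i - a (S i) * c (S i) i s) * h i s).
Proof.
  destruct (coef_span c s hmonic (S i) a) as [b Hb].
  eapply wint_eq; [exact (wint_peval_P (S i) a b i Hb)| |reflexivity].
  replace (Nat.leb i (S i)) with true by (symmetry; apply Nat.leb_le; lia).
  rewrite (Hb (S i)), (Hb i), tech5, !sum_coef_diag, coef_below by (lia || auto). ring.
Qed.

Lemma orth_peval_coef0 m a : (forall j, 0 < h j s) ->
  (forall j, (j <= m)%nat -> wint w (fun x => peval m a x * P j x) 0) ->
  forall k, (k <= m)%nat -> a k = 0.
Proof.
  intros hp H. destruct (coef_span c s hmonic m a) as [b Hb].
  assert (Hz : forall j, (j <= m)%nat -> b j = 0).
  { intros j Hj. assert (E := int01_unique _ _ _ (wint_peval_P m a b j Hb) (H j Hj)).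
    replace (Nat.leb j m) with true in E by (symmetry; apply Nat.leb_le; lia).
    specialize (hp j). apply Rmult_integral in E. destruct E; [auto|lra]. }
  intros k Hk. rewrite Hb by auto. apply sum_eq_R0. intros j Hj. rewrite Hz by auto. ring.
Qed.

End Orthogonality.

Lemma continuity_pt_fconst (l x : R) : continuity_pt (fun _ => l) x.
Proof. apply continuity_pt_const. intros u v; reflexivity. Qed.

Ltac continuity_pt_tac := repeat match goal with
  | |- continuity_pt (fun y => @?f y + @?g y) _ => apply (continuity_pt_plus f g)
  | |- continuity_pt (fun y => @?f y * @?g y) _ => apply (continuity_pt_mult f g)
  | |- continuity_pt (fun y => - @?f y) _ => apply (continuity_pt_opp f)
  | |- continuity_pt (fun y => y) _ => apply derivable_continuous_pt, derivable_pt_id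
  | |- continuity_pt (fun y => ?l) _ => apply continuity_pt_fconst
  end.

Lemma derivable_pt_lim_comp_1m f x l :
  derivable_pt_lim f (1 - x) l -> derivable_pt_lim (fun y => f (1 - y)) x (- l).
Proof.
  intros H. replace (- l) with (l * (0 - 1)) by ring.
  apply (derivable_pt_lim_comp (fun y => 1 - y) f); [|exact H].
  apply (derivable_pt_lim_minus (fct_cte 1) id).
  - apply derivable_pt_lim_const.
  - apply derivable_pt_lim_id.
Qed.

Lemma continuity_pt_comp_1m f x : continuity_pt f (1 - x) -> continuity_pt (fun y => f (1 - y)) x.
Proof.
  intros H. apply (continuity_pt_comp (fun y => 1 - y) f x); [|exact H].
  apply derivable_continuous_pt. exists (- 1).
  apply (derivable_pt_lim_comp_1m (fun y => y)), derivable_pt_lim_id.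
Qed.

Lemma powr_pos x a : 0 < x -> powr x a = Rpower x a.
Proof. intros H. unfold powr. destruct (Rle_dec x 0); [lra|reflexivity]. Qed.

Lemma powr_nonpos x a : x <= 0 -> powr x a = 0.
Proof. intros H. unfold powr. destruct (Rle_dec x 0); [reflexivity|lra]. Qed.

Lemma powr_ge0 x a : 0 <= powr x a.
Proof. unfold powr. destruct (Rle_dec x 0); [lra|]. left; apply exp_pos. Qed.

Lemma powr_le1 x a : 0 <= a -> x <= 1 -> powr x a <= 1.
Proof.
  intros Ha Hx. unfold powr. destruct (Rle_dec x 0); [lra|].
  assert (E : Rpower 1 a = 1) by (unfold Rpower; rewrite ln_1, Rmult_0_r; apply exp_0).
  rewrite <- E. apply Rle_Rpower_l; lra.
Qed.

Lemma powr_S x a : 0 < x -> powr x (a + 1) = x * powr x a.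
Proof. intros H. rewrite !powr_pos, Rpower_plus, Rpower_1 by auto. ring. Qed.

Lemma powr_m1 x a : 0 < x -> powr x (a - 1) = powr x a / x.
Proof.
  intros H. rewrite !powr_pos by auto. unfold Rminus.
  rewrite Rpower_plus, Rpower_Ropp, Rpower_1 by auto. reflexivity.
Qed.

Lemma powr_lt_near0 a eps : 0 < a -> 0 < eps ->
  exists d, 0 < d /\ forall y, Rabs y < d -> powr y a < eps.
Proof.
  intros Ha He. exists (Rpower eps (/ a)). split; [apply exp_pos|].
  intros y Hy. destruct (Rle_dec y 0).
  - rewrite powr_nonpos by auto. lra.
  - rewrite powr_pos by lra. rewrite Rabs_pos_eq in Hy by lra.
    replace eps with (Rpower (Rpower eps (/ a)) a).
    + apply Rlt_Rpower_l; lra.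
    + rewrite Rpower_mult. replace (/ a * a) with 1 by (field; lra). apply Rpower_1; lra.
Qed.

Lemma powr_derivable_pos a x : 0 < x ->
  derivable_pt_lim (fun y => powr y a) x (a * powr x (a - 1)).
Proof.
  intros Hx. rewrite powr_pos by auto.
  apply (derivable_pt_lim_locally_ext (fun y => Rpower y a) _ _ 0 (2 * x)); [lra| |].
  - intros y Hy. rewrite powr_pos by lra. reflexivity.
  - apply derivable_pt_lim_power; auto.
Qed.

Lemma powr_cont a x : 0 < a -> continuity_pt (fun y => powr y a) x.
Proof.
  intros Ha. destruct (Rtotal_order x 0) as [Hx|[->|Hx]].
  - apply (continuity_pt_locally_ext (fun _ => 0) _ (- x)); [lra| |apply continuity_pt_fconst].
    intros y Hy. unfold Rdist in Hy. apply Rabs_def2 in Hy. rewrite powr_nonpos; lra.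
  - intros eps Heps. destruct (powr_lt_near0 a eps Ha Heps) as [d [Hd H]].
    exists d. split; [lra|]. intros y [_ Hy]. simpl in *. unfold Rdist in *.
    rewrite (powr_nonpos 0), Rminus_0_r in * by lra.
    rewrite Rabs_pos_eq by apply powr_ge0. apply H. exact Hy.
  - apply derivable_continuous_pt. eexists. apply powr_derivable_pos; auto.
Qed.

Lemma powr_derivable_gt1 a x : 1 < a -> 0 <= x ->
  derivable_pt_lim (fun y => powr y a) x (a * powr x (a - 1)).
Proof.
  intros Ha Hx. destruct (Req_dec x 0) as [->|]; [|apply powr_derivable_pos; lra].
  rewrite powr_nonpos, Rmult_0_r by lra.
  intros eps Heps. destruct (powr_lt_near0 (a - 1) eps ltac:(lra) Heps) as [d [Hd H]].
  exists (mkposreal d Hd). intros y Hy0 Hy. simpl in Hy.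
  rewrite Rplus_0_l, (powr_nonpos 0), !Rminus_0_r by lra.
  destruct (Rle_dec y 0).
  - rewrite powr_nonpos by auto. unfold Rdiv. rewrite Rmult_0_l, Rabs_R0. lra.
  - replace (powr y a / y) with (powr y (a - 1)) by (rewrite powr_m1; lra).
    rewrite Rabs_pos_eq by apply powr_ge0. apply H; auto.
Qed.

Lemma RiemannInt_antiderivative f G a b (pr : Riemann_integrable f a b) : a <= b ->
  (forall x, a <= x <= b -> continuity_pt f x) ->
  (forall x, a <= x <= b -> derivable_pt_lim G x (f x)) ->
  RiemannInt pr = G b - G a.
Proof.
  intros Hab Hc Hd.
  rewrite (RiemannInt_P20 Hab (FTC_P1 Hab Hc) pr).
  assert (Hanti : antiderivative f G a b).
  { split; auto. intros x Hx. exists (exist _ (f x) (Hd x Hx)).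
    symmetry. apply derive_pt_eq_0, Hd; auto. }
  destruct (antiderivative_Ucte _ _ _ _ _ (RiemannInt_P29 Hab Hc) Hanti) as [k Hk].
  rewrite (Hk b), (Hk a) by lra. ring.
Qed.

Lemma RiemannInt_jump A B s G g F b (pr : Riemann_integrable F 0 b) : 0 < s < b ->
  (forall x, 0 <= x <= b -> derivable_pt_lim G x (g x)) ->
  (forall x, 0 <= x <= b -> continuity_pt g x) ->
  (forall x, 0 < x < b -> x <> s -> F x = g x * (A + B * heav (x - s))) ->
  RiemannInt pr = A * (G s - G 0) + (A + B) * (G b - G s).
Proof.
  intros Hsb Hd Hc HF.
  assert (Hcl : forall k x, 0 <= x <= b -> continuity_pt (fun x => k * g x) x)
    by (intros k x Hx; apply (continuity_pt_scal g), Hc, Hx).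
  assert (Hdl : forall k x, 0 <= x <= b -> derivable_pt_lim (fun x => k * G x) x (k * g x))
    by (intros k x Hx; apply (derivable_pt_lim_scal G), Hd, Hx).
  assert (H0sb : 0 <= s <= b) by lra.
  rewrite <- (RiemannInt_P26 (RiemannInt_P22 pr H0sb) (RiemannInt_P23 pr H0sb) pr).
  assert (q1 : Riemann_integrable (fun x => A * g x) 0 s)
    by (apply continuity_implies_RiemannInt; [lra|]; intros x Hx; apply Hcl; lra).
  assert (q2 : Riemann_integrable (fun x => (A + B) * g x) s b)
    by (apply continuity_implies_RiemannInt; [lra|]; intros x Hx; apply Hcl; lra).
  rewrite (RiemannInt_P18 _ q1), (RiemannInt_P18 _ q2); try lra.
  - rewrite (RiemannInt_antiderivative _ (fun x => A * G x) _ _ q1),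
      (RiemannInt_antiderivative _ (fun x => (A + B) * G x) _ _ q2);
      try lra; try ring; intros x Hx; (apply Hcl || apply Hdl); lra.
  - intros x Hx. rewrite HF by lra. unfold heav.
    destruct (Rlt_dec (x - s) 0); [lra|ring].
  - intros x Hx. rewrite HF by lra. unfold heav.
    destruct (Rlt_dec (x - s) 0); [ring|lra].
Qed.

Lemma int01_jump_ibp A B s G g F : 0 < s < 1 ->
  (forall x, 0 <= x < 1 -> derivable_pt_lim G x (g x)) ->
  (forall x, 0 <= x < 1 -> continuity_pt g x) ->
  (forall x, 0 < x < 1 -> x <> s -> F x = g x * (A + B * heav (x - s))) ->
  (forall b, 0 < b < 1 -> inhabited (Riemann_integrable F 0 b)) ->
  G 0 = 0 -> continuity_pt G 1 -> G 1 = 0 ->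
  int01 F (- B * G s).
Proof.
  intros Hs Hd Hc HF Hi HG0 HG1c HG1. split; auto.
  assert (Hsplit : forall b (pr : Riemann_integrable F 0 b), s < b < 1 ->
     RiemannInt pr = (A + B) * G b - B * G s).
  { intros b pr Hb. rewrite (RiemannInt_jump A B s G g F b pr), HG0; try lra; try ring;
      intros x Hx; [apply Hd| apply Hc| apply HF]; lra. }
  intros eps Heps.
  assert (HAB : 0 < Rabs (A + B) + 1) by (generalize (Rabs_pos (A + B)); lra).
  destruct (HG1c (eps / (Rabs (A + B) + 1))) as [d [Hd0 Hd1]].
  { apply Rdiv_lt_0_compat; lra. }
  destruct (exists_pos_below3 d (1 - s) 1) as [d' Hd']; try lra.
  exists d'. split; [lra|]. intros b pr Hb.
  rewrite Hsplit by lra. replace ((A + B) * G b - B * G s - - B * G s) with ((A + B) * G b) by ring.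
  assert (X : Rabs (G b) < eps / (Rabs (A + B) + 1)).
  { assert (Y : dist R_met (G b) (G 1) < eps / (Rabs (A + B) + 1)).
    { apply Hd1. split; [split; [exact I| intro; lra]|].
      simpl. unfold Rdist. rewrite Rabs_left; lra. }
    simpl in Y. unfold Rdist in Y. rewrite HG1, Rminus_0_r in Y. exact Y. }
  rewrite Rabs_mult. apply Rmult_lt_compat_l with (r := Rabs (A + B) + 1) in X; auto.
  replace ((Rabs (A + B) + 1) * (eps / (Rabs (A + B) + 1))) with eps in X by (field; lra).
  generalize (Rabs_pos (A + B)) (Rabs_pos (G b)). nra.
Qed.

(* [(x^(al+1) (1-x)^gam)' = ((al+1)(1-x) - gam x) x^al (1-x)^(gam-1)] is the Pearson equation
   of the Jacobi weight; the boundary terms vanish at [0] and [1] and only the jump at [s]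
   survives. *)
Lemma int01_pearson al gam A B s (u u' F : R -> R) : 0 < al -> 0 < gam -> 0 < s < 1 ->
  (forall x, derivable_pt_lim u x (u' x)) -> (forall x, continuity_pt u' x) ->
  (forall x, 0 < x < 1 -> F x = (((al + 1) * (1 - x) - gam * x) * u x + x * (1 - x) * u' x)
                               * powr x al * powr (1 - x) (gam - 1) * (A + B * heav (x - s))) ->
  (forall b, 0 < b < 1 -> inhabited (Riemann_integrable F 0 b)) ->
  int01 F (- B * (powr s (al + 1) * powr (1 - s) gam * u s)).
Proof.
  intros Hal Hgam Hs Hu Hu' HF Hi.
  assert (Hcu : forall x, continuity_pt u x)
    by (intros x; apply derivable_continuous_pt; exists (u' x); apply Hu).
  assert (Hc1 : forall x, continuity_pt (fun y => powr (1 - y) gam) x)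
    by (intros x; apply (continuity_pt_comp_1m (fun y => powr y gam)), powr_cont, Hgam).
  set (G := fun x => powr x (al + 1) * powr (1 - x) gam * u x).
  apply (int01_jump_ibp A B s G
    (fun x => ((al + 1) * powr x al * powr (1 - x) gam
               + powr x (al + 1) * - (gam * powr (1 - x) (gam - 1))) * u x
              + powr x (al + 1) * powr (1 - x) gam * u' x)); auto.
  - intros x Hx. unfold G.
    apply (derivable_pt_lim_mult (fun y => powr y (al + 1) * powr (1 - y) gam) u); [|apply Hu].
    apply (derivable_pt_lim_mult (fun y => powr y (al + 1)) (fun y => powr (1 - y) gam)).
    + pose proof (powr_derivable_gt1 (al + 1) x ltac:(lra) ltac:(lra)) as Hd.
      replace (al + 1 - 1) with al in Hd by ring. exact Hd.
    + apply (derivable_pt_lim_comp_1m (fun y => powr y gam)), powr_derivable_pos. lra.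
  - intros x Hx. continuity_pt_tac; auto; try apply powr_cont; try lra.
    apply (continuity_pt_comp_1m (fun y => powr y (gam - 1))).
    apply derivable_continuous_pt. eexists. apply powr_derivable_pos. lra.
  - intros x Hx _. rewrite HF by lra. rewrite powr_S, (powr_m1 (1 - x) gam) by lra.
    field. lra.
  - unfold G. rewrite (powr_nonpos 0) by lra. ring.
  - unfold G. continuity_pt_tac; auto. apply powr_cont. lra.
  - unfold G. rewrite Rminus_diag, (powr_nonpos 0 gam) by lra. ring.
Qed.

Definition jacobi (al be x : R) : R := powr x al * powr (1 - x) be.

Lemma jacobi_S_l al be x : 0 < x -> powr x (al + 1) * powr (1 - x) be = x * jacobi al be x.
Proof. intros Hx. unfold jacobi. rewrite powr_S by lra. ring. Qed.

Lemma jacobi_S_S al be x : 0 < x < 1 ->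
  powr x (al + 1) * powr (1 - x) (be + 1) = x * (1 - x) * jacobi al be x.
Proof. intros Hx. unfold jacobi. rewrite !powr_S by lra. ring. Qed.

Section RecurrenceCoefficients.
Variables al be A B : R.
Hypothesis hal : 0 < al.
Hypothesis hbe : 0 < be.
Variable c : nat -> nat -> R -> R.
Variable h : nat -> R -> R.
Hypothesis hmonic : forall n s, c n n s = 1.
Variable t : R.
Hypothesis ht : 0 < t < 1.
Hypothesis horth : forall i j : nat, i <> j ->
  int01 (fun x => polyP c i t x * polyP c j t x * weight al be A B t x) 0.
Hypothesis hh : forall i : nat,
  int01 (fun x => polyP c i t x ^ 2 * weight al be A B t x) (h i t).
Hypothesis hpos : forall i, 0 < h i t.

Local Notation w := (weight al be A B t).
Local Notation P j := (polyP c j t).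
Local Notation a := (coef c t).

(* [p1 j] and [p2 j] are the coefficients of [x^(j-1)] and [x^(j-2)] in [P_j]; [alpha_rec],
   [beta_rec] are the recurrence coefficients in terms of them (see [recurrence_coef_unique]),
   and [Rn], [rn] are the paper's [R_n], [r_n]. *)
Definition p1 (j : nat) : R := match j with O => 0 | S j' => c (S j') j' t end.
Definition p2 (j : nat) : R :=
  match j with S (S j') => c (S (S j')) j' t | _ => 0 end.
Definition alpha_rec (j : nat) : R := p1 j - p1 (S j).
Definition beta_rec (j : nat) : R := match j with O => 0 | S j' => h (S j') t / h j' t end.
Definition jump : R := B * jacobi al be t.
Definition Rn (j : nat) : R := jump * P j t ^ 2 / h j t.
Definition rn (j : nat) : R :=
  match j with O => 0 | S j' => jump * P (S j') t * P j' t / h j' t end.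

Lemma coef_sub1 j : a (S j) j = p1 (S j).
Proof. apply coef_below. lia. Qed.

Lemma coef_sub2 j : a (S (S j)) j = p2 (S (S j)).
Proof. apply coef_below. lia. Qed.

Lemma pshift_coef_diag j : pshift (a j) j = p1 j.
Proof. destruct j; [reflexivity|]. apply coef_sub1. Qed.

Lemma pshift_coef_S_diag j : pshift (a (S j)) j = p2 (S j).
Proof. destruct j; [reflexivity|]. apply coef_sub2. Qed.

Lemma pxderiv_coef_diag j : pxderiv (a j) j = INR j.
Proof. unfold pxderiv. rewrite coef_diag by auto. ring. Qed.

Lemma pxderiv_coef_above j k : (j < k)%nat -> pxderiv (a j) k = 0.
Proof. intros H. unfold pxderiv. rewrite coef_above by auto. ring. Qed.

Lemma pshift_pxderiv_coef_diag j : pshift (pxderiv (a j)) j = (INR j - 1) * p1 j.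
Proof. destruct j; [simpl; ring|]. unfold pshift, pxderiv. rewrite coef_sub1, S_INR. ring. Qed.

Lemma pshift_pxderiv_coef_S_diag j : pshift (pxderiv (a (S j))) j = (INR j - 1) * p2 (S j).
Proof. destruct j; [simpl; ring|]. unfold pshift, pxderiv. rewrite coef_sub2, S_INR. ring. Qed.

Lemma xP_peval j x : x * P j x = peval (S j) (pshift (a j)) x.
Proof. rewrite peval_pshift, polyP_peval. reflexivity. Qed.

Lemma x_pderiv_coef j x : x * pderiv j (a j) x = peval (S j) (pxderiv (a j)) x.
Proof. rewrite pderiv_pxderiv. symmetry. apply peval_S_top0, pxderiv_coef_above. lia. Qed.

Lemma wint_xP_P j i : (i <= j)%nat -> wint w (fun x => x * P j x * P i x)
  (if Nat.eqb i j then (p1 j - p1 (S j)) * h j t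
   else if Nat.eqb (S i) j then h j t else 0).
Proof.
  intros Hij. destruct (Nat.eqb_spec i j) as [->|Hnij].
  - eapply wint_eq; [apply (wint_top1 w c h t hmonic horth hh j (pshift (a j)))| |].
    + rewrite pshift_coef_diag. simpl. rewrite coef_diag by auto. ring.
    + intros x _. cbv beta. rewrite <- xP_peval. ring.
  - destruct (Nat.eqb_spec (S i) j) as [<-|Hij'].
    + eapply wint_eq; [apply (wint_top w c h t hmonic horth hh (S i) (pshift (a i)))| |].
      * simpl. rewrite coef_diag by auto. ring.
      * intros x _. cbv beta. rewrite <- xP_peval. ring.
    + eapply wint_ext; [|apply (wint_lower_orth w c h t hmonic horth hh (S i) (pshift (a i)) j)];
        [|lia]. intros x _. cbv beta. rewrite <- xP_peval. ring.
Qed.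

Ltac decide_eqb := repeat match goal with
  | |- context [Nat.eqb ?x ?y] => destruct (Nat.eqb_spec x y); try lia
  end.

Lemma coef_three_term j k : (k <= S (S j))%nat ->
  a (S (S j)) k = pshift (a (S j)) k - alpha_rec (S j) * a (S j) k - beta_rec (S j) * a j k.
Proof.
  set (e := fun k => 1 * pshift (a (S j)) k + (- alpha_rec (S j)) * a (S j) k
                     + (- beta_rec (S j)) * a j k + (-1) * a (S (S j)) k).
  assert (He : forall x, peval (S j) e x =
    x * P (S j) x - alpha_rec (S j) * P (S j) x - beta_rec (S j) * P j x - P (S (S j)) x).
  { intros x. rewrite <- peval_S_top0.
    - unfold e. rewrite peval_lin4, peval_pshift, !peval_coef by lia. ring.
    - unfold e. simpl. rewrite !coef_diag, !coef_above by (lia || auto). ring. }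
  assert (Hz : forall k, (k <= S j)%nat -> e k = 0).
  { apply (orth_peval_coef0 w c h t hmonic horth hh); [exact hpos|].
    intros i Hi. eapply wint_eq.
    - apply wint_sub; [apply wint_sub; [apply wint_sub|]|];
        [apply (wint_xP_P (S j) i Hi)
        | exact (wint_scal w _ _ (alpha_rec (S j)) (wint_PP w c h t horth hh (S j) i))
        | exact (wint_scal w _ _ (beta_rec (S j)) (wint_PP w c h t horth hh j i))| apply (wint_PP w c h t horth hh (S (S j)) i)].
    - unfold alpha_rec, beta_rec. decide_eqb; subst; try ring.
      field. apply Rgt_not_eq, hpos.
    - intros x _. cbv beta. rewrite He. ring. }
  intros Hk. destruct (Nat.eq_dec k (S (S j))) as [->|Hne].
  - simpl. rewrite !coef_diag, !coef_above by (lia || auto). ring.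
  - assert (X := Hz k ltac:(lia)). unfold e in X. lra.
Qed.

Lemma P_three_term j x :
  P (S (S j)) x = (x - alpha_rec (S j)) * P (S j) x - beta_rec (S j) * P j x.
Proof.
  rewrite polyP_peval, (peval_ext _ _ (fun k => 1 * pshift (a (S j)) k
      + (- alpha_rec (S j)) * a (S j) k + (- beta_rec (S j)) * a j k + 0 * a j k)).
  - rewrite peval_lin4, peval_pshift, !peval_coef by lia. ring.
  - intros k Hk. rewrite coef_three_term by auto. ring.
Qed.

Lemma p2_S j : p2 (S j) = p2 j - alpha_rec j * p1 j - beta_rec j.
Proof.
  destruct j as [|j]; [simpl; ring|].
  assert (X := coef_three_term j j ltac:(lia)).
  rewrite coef_sub2, coef_sub1, coef_diag in X by auto. rewrite X.
  destruct j as [|j]; [simpl; ring|]. unfold pshift. rewrite coef_sub2. ring.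
Qed.

Lemma rn_S_add j : rn (S j) + rn j = (t - alpha_rec j) * Rn j.
Proof.
  assert (Hh := hpos). destruct j as [|j]; unfold rn, Rn.
  - unfold alpha_rec, p1, polyP. simpl. rewrite !hmonic.
    field. apply Rgt_not_eq, hpos.
  - rewrite P_three_term. unfold beta_rec. field. split; apply Rgt_not_eq, hpos.
Qed.

Lemma recurrence_coef_unique m an bn :
  (forall x, x * P (S m) x = P (S (S m)) x + an * P (S m) x + bn * P m x) ->
  an = alpha_rec (S m) /\ bn = beta_rec (S m).
Proof.
  intros Hr.
  assert (Hval : forall i, (i <= S m)%nat -> wint w (fun x => x * P (S m) x * P i x)
      ((if Nat.eqb (S (S m)) i then h i t else 0) + an * (if Nat.eqb (S m) i then h i t else 0)
       + bn * (if Nat.eqb m i then h i t else 0))).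
  { intros i Hi. eapply wint_eq.
    - apply wint_add; [apply wint_add|];
        [apply (wint_PP w c h t horth hh (S (S m)) i)
        | exact (wint_scal w _ _ an (wint_PP w c h t horth hh (S m) i))
        | exact (wint_scal w _ _ bn (wint_PP w c h t horth hh m i))].
    - reflexivity.
    - intros x _. cbv beta. rewrite Hr. ring. }
  assert (E1 := int01_unique _ _ _ (Hval (S m) (le_n _)) (wint_xP_P (S m) (S m) (le_n _))).
  assert (E2 := int01_unique _ _ _ (Hval m ltac:(lia)) (wint_xP_P (S m) m ltac:(lia))).
  revert E1 E2. decide_eqb. intros E1 E2.
  assert (Hm := hpos m). assert (HSm := hpos (S m)).
  unfold alpha_rec, beta_rec. split.
  - apply (Rmult_eq_reg_r (h (S m) t)); lra.
  - apply (Rmult_eq_reg_r (h m t)); [|lra]. field_simplify; lra.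
Qed.


Lemma PP_derivable i j x : derivable_pt_lim (fun y => P i y * P j y) x
  (pderiv i (a i) x * P j x + P i x * pderiv j (a j) x).
Proof. apply (derivable_pt_lim_mult (P i) (P j)); apply polyP_derivable. Qed.

Lemma PP_deriv_cont i j x :
  continuity_pt (fun y => pderiv i (a i) y * P j y + P i y * pderiv j (a j) y) x.
Proof. continuity_pt_tac; apply pderiv_cont || apply polyP_cont. Qed.

Lemma pearson_PP i j v :
  wint w (fun x => ((al + 1) - (al + be + 2) * x) * (P i x * P j x)
     + x * (1 - x) * (pderiv i (a i) x * P j x + P i x * pderiv j (a j) x)) v ->
  v = - t * (1 - t) * jump * P i t * P j t.
Proof.
  intros Hv. symmetry.
  eapply int01_unique; [|exact Hv].
  replace (- t * (1 - t) * jump * P i t * P j t)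
    with (- B * (powr t (al + 1) * powr (1 - t) (be + 1) * (P i t * P j t)))
    by (unfold jump; rewrite jacobi_S_S by lra; ring).
  apply (int01_pearson al (be + 1) A B t (fun y => P i y * P j y)
    (fun y => pderiv i (a i) y * P j y + P i y * pderiv j (a j) y)); try lra.
  - intros x. apply PP_derivable.
  - intros x. apply PP_deriv_cont.
  - intros x Hx. unfold weight. replace (be + 1 - 1) with be by ring. ring.
  - apply Hv.
Qed.

Lemma pearson_PP_1m i j v :
  int01 (fun x => ((al + 1 + be) * (P i x * P j x)
                   + x * (pderiv i (a i) x * P j x + P i x * pderiv j (a j) x)) * w x
                  - be * (P i x * P j x / (1 - x) * w x)) v ->
  v = - t * jump * P i t * P j t.
Proof.
  intros Hv. symmetry.
  eapply int01_unique; [|exact Hv].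
  replace (- t * jump * P i t * P j t)
    with (- B * (powr t (al + 1) * powr (1 - t) be * (P i t * P j t)))
    by (unfold jump; rewrite jacobi_S_l by lra; ring).
  apply (int01_pearson al be A B t (fun y => P i y * P j y)
    (fun y => pderiv i (a i) y * P j y + P i y * pderiv j (a j) y)); try lra.
  - intros x. apply PP_derivable.
  - intros x. apply PP_deriv_cont.
  - intros x Hx. unfold weight. rewrite powr_m1 by lra. field. lra.
  - apply Hv.
Qed.

Lemma alpha_rec_eq j : (2 * INR j + 2 + al + be) * alpha_rec j
  = 2 * p1 j + 2 * INR j + 1 + al + t * (1 - t) * Rn j.
Proof.
  set (f := fun k => 2 * pxderiv (a j) k + (-2) * pshift (pxderiv (a j)) k
                     + (al + 1) * a j k + (- (al + be + 2)) * pshift (a j) k).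
  assert (Hv : wint w (fun x => ((al + 1) - (al + be + 2) * x) * (P j x * P j x)
      + x * (1 - x) * (pderiv j (a j) x * P j x + P j x * pderiv j (a j) x))
      ((f j - f (S j) * c (S j) j t) * h j t)).
  { eapply wint_ext; [|apply (wint_top1 w c h t hmonic horth hh j f)].
    intros x _. unfold f. rewrite peval_lin4, <- x_pderiv_coef, !peval_pshift.
    rewrite (peval_coef c t j (S j)), <- pderiv_pxderiv, <- polyP_peval by lia. ring. }
  assert (E := pearson_PP j j _ Hv).
  unfold f in E.
  rewrite pxderiv_coef_diag, pshift_pxderiv_coef_diag, pshift_coef_diag,
    (pxderiv_coef_above j (S j)), (coef_above c t j (S j)) in E by lia.
  simpl pshift in E. rewrite coef_diag, pxderiv_coef_diag in E by auto.
  fold (p1 (S j)) in E.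
  unfold alpha_rec, Rn. assert (Hj := hpos j).
  apply (Rmult_eq_reg_r (h j t)); [|lra].
  field_simplify; [|lra]. field_simplify in E. lra.
Qed.

Lemma p2_eq j : 2 * p2 j = p1 j + p1 j ^ 2
  + (2 * INR j + 1 + al + be) * beta_rec j - t * (1 - t) * rn j.
Proof.
  destruct j as [|j]; [simpl; ring|].
  (* [x(1-x) P_(j+1)'] has degree [j+2]; adding [(j+1) x P_(j+1)] cancels its top coefficient. *)
  set (q1 := fun k => 1 * pxderiv (a (S j)) k + (-1) * pshift (pxderiv (a (S j))) k
                      + (INR j + 1) * pshift (a (S j)) k + 0 * a j k).
  set (q2 := fun k => 1 * pxderiv (a j) k + (-1) * pshift (pxderiv (a j)) k
                      + (al + 1) * a j k + (- (al + be + 2)) * pshift (a j) k).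
  assert (Hq1 : q1 (S (S j)) = 0).
  { unfold q1. rewrite pxderiv_coef_above by lia. simpl.
    rewrite coef_diag, coef_above, pxderiv_coef_diag, S_INR by (lia || auto). ring. }
  assert (Hv : wint w (fun x => ((al + 1) - (al + be + 2) * x) * (P (S j) x * P j x)
      + x * (1 - x) * (pderiv (S j) (a (S j)) x * P j x + P (S j) x * pderiv j (a j) x))
      ((q1 j - q1 (S j) * c (S j) j t) * h j t + q2 (S j) * h (S j) t
       - (INR j + 1) * (pshift (a j) (S j) * h (S j) t))).
  { eapply wint_ext; [|exact (wint_sub w _ _ _ _
      (wint_add w _ _ _ _ (wint_top1 w c h t hmonic horth hh j q1)
                          (wint_top w c h t hmonic horth hh (S j) q2))
      (wint_scal w _ _ (INR j + 1) (wint_top w c h t hmonic horth hh (S j) (pshift (a j)))))].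
    intros x _. cbv beta. rewrite <- (peval_S_top0 (S j) q1 x Hq1). unfold q1, q2.
    rewrite !peval_lin4, <- !x_pderiv_coef,
      (peval_pshift (S j) (pxderiv (a (S j)))), (peval_pshift (S j) (a (S j))),
      (peval_pshift j (pxderiv (a j))), (peval_pshift j (a j)).
    rewrite (peval_coef c t j (S (S j))), (peval_coef c t j (S j)), (peval_coef c t (S j) (S j))
      by lia.
    rewrite <- (pderiv_pxderiv (S j)), <- (pderiv_pxderiv j), <- (polyP_peval c t j). ring. }
  assert (E := pearson_PP (S j) j _ Hv).
  unfold q1, q2 in E.
  rewrite (pxderiv_coef_diag (S j)), (pshift_pxderiv_coef_diag (S j)), (pshift_coef_diag (S j)),
    (coef_above c t j (S j)), (pshift_pxderiv_coef_S_diag j), (pshift_coef_S_diag j),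
    (coef_diag _ _ hmonic j), (pxderiv_coef_above j (S j)) in E by lia.
  simpl pshift in E. rewrite (pxderiv_coef_diag j), (coef_diag _ _ hmonic j) in E.
  unfold pxderiv in E. rewrite coef_sub1 in E. fold (p1 (S j)) in E.
  unfold rn, beta_rec. assert (Hj := hpos j). assert (HSj := hpos (S j)).
  rewrite S_INR in *.
  apply (Rmult_eq_reg_r (h j t)); [|lra].
  field_simplify; [|lra]. field_simplify in E. nra.
Qed.

Lemma xn_eq n I1 : int01 (fun y => P n y ^ 2 / (1 - y) * w y) I1 ->
  be / h n t * I1 = 2 * INR n + 1 + al + be + t * Rn n.
Proof.
  intros HI1. assert (Hn := hpos n).
  set (q := fun k => (al + 1 + be) * a n k + 2 * pxderiv (a n) k + 0 * a n k + 0 * a n k).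
  assert (Hv : int01 (fun x => ((al + 1 + be) * (P n x * P n x)
      + x * (pderiv n (a n) x * P n x + P n x * pderiv n (a n) x)) * w x
      - be * (P n x * P n x / (1 - x) * w x)) (q n * h n t - be * I1)).
  { eapply int01_ext; [|exact (int01_sub _ _ _ _ (wint_top w c h t hmonic horth hh n q)
                                                   (int01_scal _ _ be HI1))].
    intros x _. unfold q. rewrite peval_lin4, <- pderiv_pxderiv, <- polyP_peval.
    unfold Rdiv. ring. }
  assert (E := pearson_PP_1m n n _ Hv).
  unfold q in E. rewrite coef_diag, pxderiv_coef_diag in E by auto.
  assert (EI : be * I1 = (2 * INR n + 1 + al + be) * h n t + t * jump * P n t ^ 2) by lra.
  unfold Rn. replace (be / h n t * I1) with (be * I1 / h n t) by (field; lra).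
  rewrite EI. field. lra.
Qed.

Lemma yn_eq m I2 : int01 (fun y => P (S m) y * P m y / (1 - y) * w y) I2 ->
  be / h m t * I2 = - p1 (S m) + t * rn (S m).
Proof.
  intros HI2. assert (Hm := hpos m).
  set (q := fun k => (al + 1 + be) * a m k + 1 * pxderiv (a m) k + 0 * a m k + 0 * a m k).
  assert (Hv : int01 (fun x => ((al + 1 + be) * (P (S m) x * P m x)
      + x * (pderiv (S m) (a (S m)) x * P m x + P (S m) x * pderiv m (a m) x)) * w x
      - be * (P (S m) x * P m x / (1 - x) * w x))
      ((pxderiv (a (S m)) m - pxderiv (a (S m)) (S m) * c (S m) m t) * h m t + 0 - be * I2)).
  { eapply int01_ext; [|exact (int01_sub _ _ _ _
      (wint_add w _ _ _ _ (wint_top1 w c h t hmonic horth hh m (pxderiv (a (S m))))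
                          (wint_lower_orth w c h t hmonic horth hh m q (S m) (Nat.lt_succ_diag_r m)))
      (int01_scal _ _ be HI2))].
    intros x _. unfold q. rewrite peval_lin4, <- (pderiv_pxderiv (S m)), <- (pderiv_pxderiv m),
      <- polyP_peval. unfold Rdiv. ring. }
  assert (E := pearson_PP_1m (S m) m _ Hv).
  unfold pxderiv in E. rewrite coef_diag, coef_sub1, S_INR in E by auto. fold (p1 (S m)) in E.
  assert (EI : be * I2 = - p1 (S m) * h m t + t * jump * P (S m) t * P m t) by lra.
  unfold rn. replace (be / h m t * I2) with (be * I2 / h m t) by (field; lra).
  rewrite EI. field. lra.
Qed.

Lemma beta_rec_eq j : (2 * INR j - 1 + al + be) * (2 * INR j + 1 + al + be) * beta_rec j
  = p1 j ^ 2 + (- be + (2 * INR j + al + be) * t) * p1 j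
    + (2 * INR j + al + be) * t * (1 - t) * rn j + INR j * (INR j + al) * t.
Proof.
  induction j as [|j IH]; [simpl; ring|].
  assert (E1 := p2_S j). assert (E2 := p2_eq j). assert (E3 := p2_eq (S j)).
  assert (E4 := rn_S_add j). assert (E5 := alpha_rec_eq j).
  unfold alpha_rec in *. rewrite S_INR in *.
  apply Rminus_diag_uniq.
  match goal with |- ?L - ?R = 0 =>
    replace (L - R) with
      ((2 * INR j + al + be + 1)
         * (2 * (p2 (S j) - (p2 j - (p1 j - p1 (S j)) * p1 j - beta_rec j))
            + (2 * p2 j - (p1 j + p1 j ^ 2 + (2 * INR j + 1 + al + be) * beta_rec j
                           - t * (1 - t) * rn j))
            - (2 * p2 (S j) - (p1 (S j) + p1 (S j) ^ 2
                 + (2 * (INR j + 1) + 1 + al + be) * beta_rec (S j) - t * (1 - t) * rn (S j))))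
       + ((2 * INR j - 1 + al + be) * (2 * INR j + 1 + al + be) * beta_rec j
          - (p1 j ^ 2 + (- be + (2 * INR j + al + be) * t) * p1 j
             + (2 * INR j + al + be) * t * (1 - t) * rn j + INR j * (INR j + al) * t))
       - t * (1 - t) * (rn (S j) + rn j - (t - (p1 j - p1 (S j))) * Rn j)
       + (t - (p1 j - p1 (S j))) * ((2 * INR j + 2 + al + be) * (p1 j - p1 (S j))
            - (2 * p1 j + 2 * INR j + 1 + al + t * (1 - t) * Rn j))) by ring
  end.
  rewrite (Rminus_diag_eq _ _ E1), (Rminus_diag_eq _ _ E2), (Rminus_diag_eq _ _ E3),
    (Rminus_diag_eq _ _ E4), (Rminus_diag_eq _ _ E5), (Rminus_diag_eq _ _ IH). ring.
Qed.

End RecurrenceCoefficients.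

Definition rint (a b : R) (f : R -> R) (v : R) : Prop :=
  exists pr : Riemann_integrable f a b, RiemannInt pr = v.

Lemma rint_cont a b f : (forall x, continuity_pt f x) -> exists v, rint a b f v.
Proof.
  intros Hc. destruct (Rle_dec a b).
  - assert (pr := @continuity_implies_RiemannInt f a b r (fun x _ => Hc x)).
    exists (RiemannInt pr), pr. reflexivity.
  - assert (pr := @continuity_implies_RiemannInt f b a ltac:(lra) (fun x _ => Hc x)).
    exists (RiemannInt (RiemannInt_P1 pr)), (RiemannInt_P1 pr). reflexivity.
Qed.


Lemma rint_opp_bounds a b f v : rint a b f v -> rint b a f (- v).
Proof.
  intros [pr <-]. exists (RiemannInt_P1 pr). rewrite (RiemannInt_P8 (RiemannInt_P1 pr) pr). lra.
Qed.

Lemma rint_ext a b f g v : (forall x, f x = g x) -> rint a b f v -> rint a b g v.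
Proof. intros E H. replace g with f; auto. apply functional_extensionality; auto. Qed.

Lemma rint_sub a b f g u v : rint a b f u -> rint a b g v -> rint a b (fun x => f x - g x) (u - v).
Proof.
  intros [p1 <-] [p2 <-].
  apply (rint_ext _ _ (fun x => f x + -1 * g x)); [intros; ring|].
  exists (RiemannInt_P10 (-1) p1 p2). rewrite (RiemannInt_P13 p1 p2). ring.
Qed.

Lemma rint_const a b k : rint a b (fun _ => k) (k * (b - a)).
Proof. exists (RiemannInt_P14 a b k). apply RiemannInt_P15. Qed.

Lemma rint_abs_le a b f v M : rint a b f v ->
  (forall x, Rmin a b <= x <= Rmax a b -> Rabs (f x) <= M) -> Rabs v <= M * Rabs (b - a).
Proof.
  intros [pr <-] HM.
  assert (Hle : forall a b (pr : Riemann_integrable f a b), a <= b ->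
     (forall x, a <= x <= b -> Rabs (f x) <= M) -> Rabs (RiemannInt pr) <= M * (b - a)).
  { clear. intros a b pr Hab HM.
    eapply Rle_trans; [apply (RiemannInt_P17 pr (RiemannInt_P16 pr) Hab)|].
    rewrite <- (RiemannInt_P15 (RiemannInt_P14 a b M)). apply RiemannInt_P19; auto.
    intros x Hx. apply HM. lra. }
  destruct (Rle_dec a b).
  - rewrite (Rabs_pos_eq (b - a)) by lra. apply Hle; auto. intros x Hx. apply HM.
    rewrite Rmin_left, Rmax_right by lra. auto.
  - rewrite (RiemannInt_P8 pr (RiemannInt_P1 pr)), Rabs_Ropp, (Rabs_left (b - a)) by lra.
    replace (- (b - a)) with (a - b) by ring. apply Hle; [lra|]. intros x Hx. apply HM.
    rewrite Rmin_right, Rmax_left by lra. auto.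
Qed.

Lemma between_abs_le t s x : Rmin t s <= x <= Rmax t s -> Rabs (x - t) <= Rabs (s - t).
Proof.
  intros Hx. destruct (Rle_dec t s).
  - rewrite Rmin_left, Rmax_right in Hx by lra. rewrite !Rabs_pos_eq by lra. lra.
  - rewrite Rmin_right, Rmax_left in Hx by lra. rewrite !Rabs_left1 by lra. lra.
Qed.

Lemma derivable_pt_lim_rint (f g : R -> R) (F : R -> R -> R) t M d :
  0 < d -> continuity_pt g t ->
  (forall s, 0 < Rabs (s - t) < d -> rint t s (F s) (f s - f t)) ->
  (forall s x, 0 < Rabs (s - t) < d -> Rmin t s <= x <= Rmax t s ->
     Rabs (F s x - g x) <= M * Rabs (s - t)) ->
  derivable_pt_lim f t (g t).
Proof.
  intros Hd Hg Hint HF eps Heps.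
  destruct (Hg (eps / 2) ltac:(lra)) as [dg [Hdg Cg]].
  assert (HM : 0 < Rabs M + 1) by (generalize (Rabs_pos M); lra).
  destruct (exists_pos_below3 d dg (eps / (2 * (Rabs M + 1)))) as [del Hdel];
    try (apply Rdiv_lt_0_compat); try lra.
  exists (mkposreal del ltac:(lra)). intros y Hy0 Hy. simpl in Hy.
  set (s := t + y). assert (Hst : s - t = y) by (unfold s; ring).
  assert (Hs : 0 < Rabs (s - t) < d) by (rewrite Hst; split; [apply Rabs_pos_lt|]; lra).
  assert (Hgx : forall x, Rmin t s <= x <= Rmax t s -> Rabs (g x - g t) < eps / 2).
  { intros x Hx. destruct (Req_dec x t) as [->|Hxt].
    - rewrite Rminus_diag, Rabs_R0. lra.
    - apply (Cg x). split; [split; [exact I| now apply not_eq_sym]|].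
      simpl. unfold Rdist. pose proof (between_abs_le t s x Hx) as Hb. rewrite Hst in Hb. lra. }
  assert (Hbound := rint_abs_le _ _ _ _ (M * Rabs y + eps / 2)
    (rint_sub _ _ _ _ _ _ (Hint s Hs) (rint_const t s (g t)))).
  rewrite Hst in Hbound.
  replace ((f s - f t) / y - g t) with ((f s - f t - g t * y) / y) by (field; lra).
  unfold Rdiv. rewrite Rabs_mult, Rabs_inv.
  apply (Rmult_lt_reg_r (Rabs y)); [apply Rabs_pos_lt; auto|].
  rewrite Rmult_assoc, Rinv_l, Rmult_1_r by (apply Rabs_no_R0; auto).
  eapply Rle_lt_trans; [apply Hbound|].
  - intros x Hx. replace (F s x - g t) with ((F s x - g x) + (g x - g t)) by ring.
    eapply Rle_trans; [apply Rabs_triang|]. rewrite <- Hst.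
    generalize (HF s x Hs Hx) (Hgx x Hx). lra.
  - assert (Hy' : 0 < Rabs y) by (apply Rabs_pos_lt; auto).
    assert (M * Rabs y <= Rabs M * Rabs y) by (apply Rmult_le_compat_r; [lra| apply RRle_abs]).
    assert (Rabs M * Rabs y < eps / 2).
    { apply Rle_lt_trans with (Rabs M * (eps / (2 * (Rabs M + 1)))).
      - apply Rmult_le_compat_l; [apply Rabs_pos| lra].
      - replace (Rabs M * (eps / (2 * (Rabs M + 1)))) with (eps / 2 * (Rabs M / (Rabs M + 1)))
          by (field; lra).
        rewrite <- (Rmult_1_r (eps / 2)) at 2. apply Rmult_lt_compat_l; [lra|].
        apply (Rmult_lt_reg_r (Rabs M + 1)); [lra|]. unfold Rdiv.
        rewrite Rmult_assoc, Rinv_l; lra. }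
    nra.
Qed.

Section WeightShift.
Variables al be A B : R.
Hypothesis hal : 0 < al.
Hypothesis hbe : 0 < be.

Lemma jacobi_cont x : continuity_pt (jacobi al be) x.
Proof.
  apply (continuity_pt_mult (fun y => powr y al) (fun y => powr (1 - y) be)).
  - apply powr_cont, hal.
  - apply (continuity_pt_comp_1m (fun y => powr y be)), powr_cont, hbe.
Qed.

Lemma jacobi_bounds x : 0 <= x <= 1 -> 0 <= jacobi al be x <= 1.
Proof.
  intros Hx. unfold jacobi. split.
  - apply Rmult_le_pos; apply powr_ge0.
  - rewrite <- (Rmult_1_r 1).
    apply Rmult_le_compat; try apply powr_ge0; apply powr_le1; lra.
Qed.

(* On [(t, s)] the two weights differ by exactly [B * jacobi]; elsewhere they agree. *)
Lemma int01_weight_shift_lt s t f vt vs : 0 < t -> t < s -> s < 1 ->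
  (forall x, continuity_pt f x) ->
  int01 (fun x => f x * weight al be A B t x) vt -> int01 (fun x => f x * weight al be A B s x) vs ->
  rint t s (fun x => B * f x * jacobi al be x) (vt - vs).
Proof.
  intros H0 Hts H1 Hc [Ht Ct] [Hs Cs].
  destruct (rint_cont t s (fun x => B * f x * jacobi al be x)) as [V [pv HV]].
  { intros x. continuity_pt_tac; auto. apply jacobi_cont. }
  assert (Hsplit : forall b (p1 : Riemann_integrable (fun x => f x * weight al be A B t x) 0 b)
                   (p2 : Riemann_integrable (fun x => f x * weight al be A B s x) 0 b),
             s < b < 1 -> RiemannInt p1 - RiemannInt p2 = V).
  { intros b p1 p2 Hb.
    set (p3 := RiemannInt_P10 (-1) p1 p2).
    replace (RiemannInt p1 - RiemannInt p2) with (RiemannInt p1 + (-1) * RiemannInt p2) by ring.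
    rewrite <- (RiemannInt_P13 p1 p2 p3).
    assert (H0b : 0 <= t <= b) by lra. assert (Htb : t <= s <= b) by lra.
    set (q1 := RiemannInt_P22 p3 H0b). set (q2 := RiemannInt_P23 p3 H0b).
    rewrite <- (RiemannInt_P26 q1 q2 p3),
      <- (RiemannInt_P26 (RiemannInt_P22 q2 Htb) (RiemannInt_P23 q2 Htb) q2).
    rewrite (RiemannInt_P18 q1 (RiemannInt_P14 0 t 0)),
      (RiemannInt_P18 (RiemannInt_P23 q2 Htb) (RiemannInt_P14 s b 0)),
      (RiemannInt_P18 (RiemannInt_P22 q2 Htb) pv), !RiemannInt_P15, HV; try lra; try ring;
      intros x Hx; unfold fct_cte, weight, heav;
      destruct (Rlt_dec (x - t) 0); destruct (Rlt_dec (x - s) 0); try lra; unfold jacobi; ring. }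
  replace (vt - vs) with V; [exists pv; exact HV|].
  apply cond_eq. intros eps Heps.
  destruct (Ct (eps / 2) ltac:(lra)) as [d1 [Hd1 C1]].
  destruct (Cs (eps / 2) ltac:(lra)) as [d2 [Hd2 C2]].
  destruct (exists_pos_below3 d1 d2 (1 - s)) as [d Hd]; try lra.
  destruct (Ht (1 - d / 2) ltac:(lra)) as [p1]. destruct (Hs (1 - d / 2) ltac:(lra)) as [p2].
  rewrite <- (Hsplit _ p1 p2) by lra.
  assert (X1 := C1 _ p1 ltac:(lra)). assert (X2 := C2 _ p2 ltac:(lra)).
  replace (RiemannInt p1 - RiemannInt p2 - (vt - vs))
    with ((RiemannInt p1 - vt) - (RiemannInt p2 - vs)) by ring.
  eapply Rle_lt_trans; [apply Rabs_triang|]. rewrite Rabs_Ropp. lra.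
Qed.

Lemma int01_weight_shift s t f vt vs : 0 < t < 1 -> 0 < s < 1 ->
  (forall x, continuity_pt f x) ->
  int01 (fun x => f x * weight al be A B t x) vt -> int01 (fun x => f x * weight al be A B s x) vs ->
  rint t s (fun x => B * f x * jacobi al be x) (vt - vs).
Proof.
  intros Ht Hs Hc It Is. destruct (Rtotal_order t s) as [Hlt|[<-|Hgt]].
  - apply int01_weight_shift_lt; auto; lra.
  - rewrite (int01_unique _ _ _ It Is), Rminus_diag.
    exists (RiemannInt_P7 (fun x => B * f x * jacobi al be x) t). apply RiemannInt_P9.
  - replace (vt - vs) with (- (vs - vt)) by ring.
    apply rint_opp_bounds, int01_weight_shift_lt; auto; lra.
Qed.

End WeightShift.

Section SubleadingDerivative.
Variables al be A B : R.
Hypothesis hal : 0 < al.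
Hypothesis hbe : 0 < be.
Variable c : nat -> nat -> R -> R.
Variable h : nat -> R -> R.
Hypothesis hmonic : forall n s, c n n s = 1.
Hypothesis horth : forall s, 0 < s < 1 -> forall i j : nat, i <> j ->
  int01 (fun x => polyP c i s x * polyP c j s x * weight al be A B s x) 0.
Hypothesis hh : forall s, 0 < s < 1 -> forall i : nat,
  int01 (fun x => polyP c i s x ^ 2 * weight al be A B s x) (h i s).
Hypothesis hpos : forall s, 0 < s < 1 -> forall i : nat, 0 < h i s.
Variable t : R.
Hypothesis ht : 0 < t < 1.
Variable m : nat.

(* [P_(m+1)(.; s) - P_(m+1)(.; t)] has degree [<= m]; its coordinates in the basis
   [P_j(.; t)] are weighted integrals of [P_(m+1)(.; s)] against the jump of the weight. *)
Lemma coef_diff_expansion s : 0 < s < 1 -> exists b : nat -> R,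
  (forall k, (k <= m)%nat ->
     coef c s (S m) k - coef c t (S m) k = sum_f_R0 (fun j => b j * coef c t j k) m) /\
  (forall i, (i <= m)%nat ->
     rint t s (fun x => B * (polyP c (S m) s x * polyP c i t x) * jacobi al be x) (b i * h i t)).
Proof.
  intros hs.
  destruct (coef_span c t hmonic m (fun k => coef c s (S m) k - coef c t (S m) k)) as [b Hb].
  exists b. split; [exact Hb|]. intros i Hi.
  assert (HD : forall x, peval m (fun k => coef c s (S m) k - coef c t (S m) k) x
                         = polyP c (S m) s x - polyP c (S m) t x).
  { intros x. rewrite <- peval_S_top0.
    - rewrite peval_sub, !polyP_peval. reflexivity.
    - rewrite !coef_diag by auto. ring. }
  assert (Vt : wint (weight al be A B t) (fun x => polyP c (S m) s x * polyP c i t x)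
                    (b i * h i t)).
  { eapply wint_eq; [exact (wint_add _ _ _ _ _
      (wint_peval_P _ c h t (horth t ht) (hh t ht) m _ b i Hb)
      (wint_PP _ c h t (horth t ht) (hh t ht) (S m) i))| |].
    - replace (Nat.leb i m) with true by (symmetry; apply Nat.leb_le; auto).
      replace (Nat.eqb (S m) i) with false by (symmetry; apply Nat.eqb_neq; lia). ring.
    - intros x _. cbv beta. rewrite HD. ring. }
  assert (Vs : int01 (fun x => (polyP c (S m) s x * polyP c i t x) * weight al be A B s x) 0).
  { eapply int01_ext; [|exact (wint_lower_orth _ c h s hmonic (horth s hs) (hh s hs) i
                                                 (coef c t i) (S m) ltac:(lia))].
    intros x _. cbv beta. rewrite (polyP_peval c t i x). ring. }
  replace (b i * h i t) with (b i * h i t - 0) by ring.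
  apply (int01_weight_shift al be A B hal hbe s t); auto.
  intros x. apply (continuity_pt_mult (polyP c (S m) s) (polyP c i t)); apply polyP_cont.
Qed.

Definition coef_l1 (s : R) (j : nat) : R := sum_f_R0 (fun k => Rabs (coef c s j k)) j.

Definition lip : R :=
  Rabs B * sum_f_R0 (fun j => coef_l1 t j * coef_l1 t j / h j t) m.

Lemma coef_l1_nonneg s j : 0 <= coef_l1 s j.
Proof. apply sum_abs_nonneg. Qed.

Lemma lip_nonneg : 0 <= lip.
Proof.
  unfold lip. apply Rmult_le_pos; [apply Rabs_pos|]. apply cond_pos_sum. intros j.
  apply Rmult_le_pos; [apply Rmult_le_pos; apply coef_l1_nonneg|].
  left; apply Rinv_0_lt_compat, hpos, ht.
Qed.

Lemma polyP_abs_le s j x : 0 <= x <= 1 -> Rabs (polyP c j s x) <= coef_l1 s j.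
Proof. intros Hx. rewrite polyP_peval. apply peval_abs_le. rewrite Rabs_pos_eq; lra. Qed.

Lemma coef_abs_le_l1 j k : Rabs (coef c t j k) <= coef_l1 t j.
Proof.
  destruct (Compare_dec.le_lt_dec k j).
  - apply abs_le_sum_abs; auto.
  - rewrite coef_above, Rabs_R0 by auto. apply coef_l1_nonneg.
Qed.

Lemma between_unit t' s x : 0 < t' < 1 -> 0 < s < 1 -> Rmin t' s <= x <= Rmax t' s -> 0 <= x <= 1.
Proof.
  intros Ht Hs Hx. destruct (Rle_dec t' s).
  - rewrite Rmin_left, Rmax_right in Hx by lra. lra.
  - rewrite Rmin_right, Rmax_left in Hx by lra. lra.
Qed.

Lemma expansion_coef_abs_le s b i : 0 < s < 1 -> (i <= m)%nat ->
  rint t s (fun x => B * (polyP c (S m) s x * polyP c i t x) * jacobi al be x) (b i * h i t) ->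
  Rabs (b i) <= Rabs B * coef_l1 s (S m) * coef_l1 t i * Rabs (s - t) / h i t.
Proof.
  intros hs Hi Hint. assert (hp := hpos t ht i).
  apply (Rmult_le_reg_r (h i t)); auto.
  replace (Rabs (b i) * h i t) with (Rabs (b i * h i t))
    by (rewrite Rabs_mult, (Rabs_pos_eq (h i t)); lra).
  replace (Rabs B * coef_l1 s (S m) * coef_l1 t i * Rabs (s - t) / h i t * h i t)
    with (Rabs B * coef_l1 s (S m) * coef_l1 t i * Rabs (s - t)) by (field; lra).
  apply (rint_abs_le _ _ _ _ _ Hint). intros x Hx.
  assert (H01 := between_unit t s x ht hs Hx).
  destruct (jacobi_bounds al be ltac:(lra) ltac:(lra) x H01) as [W0 W1].
  rewrite !Rabs_mult, (Rabs_pos_eq (jacobi al be x)) by lra.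
  assert (P1 := polyP_abs_le s (S m) x H01). assert (P2 := polyP_abs_le t i x H01).
  assert (X := Rmult_le_compat _ _ _ _ (Rabs_pos _) (Rabs_pos _) P1 P2).
  assert (Y := Rmult_le_compat_l _ _ _ (Rabs_pos B) X).
  assert (0 <= Rabs B * (Rabs (polyP c (S m) s x) * Rabs (polyP c i t x)))
    by (apply Rmult_le_pos; [apply Rabs_pos| apply Rmult_le_pos; apply Rabs_pos]).
  nra.
Qed.

Lemma coef_diff_abs_le s k : 0 < s < 1 -> (k <= m)%nat ->
  Rabs (coef c s (S m) k - coef c t (S m) k) <= lip * coef_l1 s (S m) * Rabs (s - t).
Proof.
  intros hs Hk. destruct (coef_diff_expansion s hs) as [b [Hb Hint]].
  rewrite Hb by auto. eapply Rle_trans; [apply Rsum_abs|].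
  replace (lip * coef_l1 s (S m) * Rabs (s - t)) with
    (sum_f_R0 (fun j => coef_l1 t j * coef_l1 t j / h j t
                        * (Rabs B * coef_l1 s (S m) * Rabs (s - t))) m)
    by (unfold lip; rewrite <- scal_sum; ring).
  apply sum_Rle. intros j Hj. rewrite Rabs_mult.
  assert (X := expansion_coef_abs_le s b j hs Hj (Hint j Hj)).
  assert (Y := coef_abs_le_l1 j k). assert (hp := hpos t ht j).
  eapply Rle_trans; [apply Rmult_le_compat; [apply Rabs_pos| apply Rabs_pos| exact X| exact Y]|].
  right. field. lra.
Qed.

Lemma coef_l1_le_twice s : 0 < s < 1 -> INR (S m) * (lip * Rabs (s - t)) <= / 2 ->
  coef_l1 s (S m) <= 2 * coef_l1 t (S m).
Proof.
  intros hs Hsmall.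
  assert (Hsplit : forall s, coef_l1 s (S m) = sum_f_R0 (fun k => Rabs (coef c s (S m) k)) m + 1).
  { intros s'. unfold coef_l1. rewrite tech5, coef_diag, Rabs_R1 by auto. reflexivity. }
  assert (Hle : sum_f_R0 (fun k => Rabs (coef c s (S m) k)) m
     <= sum_f_R0 (fun k => Rabs (coef c t (S m) k) + lip * coef_l1 s (S m) * Rabs (s - t)) m).
  { apply sum_Rle. intros k Hk.
    replace (coef c s (S m) k) with (coef c t (S m) k + (coef c s (S m) k - coef c t (S m) k))
      by ring.
    eapply Rle_trans; [apply Rabs_triang|].
    generalize (coef_diff_abs_le s k hs Hk). lra. }
  rewrite sum_plus, sum_cte in Hle.
  assert (Hs1 := Hsplit s). assert (Ht1 := Hsplit t).
  assert (0 <= coef_l1 s (S m)) by apply coef_l1_nonneg.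
  assert (INR (S m) * (lip * coef_l1 s (S m) * Rabs (s - t)) <= coef_l1 s (S m) * / 2).
  { replace (INR (S m) * (lip * coef_l1 s (S m) * Rabs (s - t)))
      with (coef_l1 s (S m) * (INR (S m) * (lip * Rabs (s - t)))) by ring.
    apply Rmult_le_compat_l; auto. }
  rewrite S_INR in *. nra.
Qed.

Lemma polyP_diff_abs_le s x : 0 < s < 1 -> INR (S m) * (lip * Rabs (s - t)) <= / 2 ->
  0 <= x <= 1 ->
  Rabs (polyP c (S m) s x - polyP c (S m) t x)
    <= INR (S m) * (lip * (2 * coef_l1 t (S m))) * Rabs (s - t).
Proof.
  intros hs Hsmall Hx.
  assert (Hl1 := coef_l1_le_twice s hs Hsmall).
  assert (Hlip := lip_nonneg). assert (Hst := Rabs_pos (s - t)).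
  rewrite !polyP_peval, <- peval_sub, peval_S_top0 by (rewrite !coef_diag by auto; ring).
  eapply Rle_trans; [apply peval_abs_le; rewrite Rabs_pos_eq; lra|].
  replace (INR (S m) * (lip * (2 * coef_l1 t (S m))) * Rabs (s - t))
    with (lip * (2 * coef_l1 t (S m)) * Rabs (s - t) * INR (S m)) by ring.
  rewrite <- sum_cte. apply sum_Rle. intros k Hk.
  eapply Rle_trans; [apply coef_diff_abs_le; auto|].
  apply Rmult_le_compat_r; [lra|]. apply Rmult_le_compat_l; lra.
Qed.

Lemma p1_diff_rint s : 0 < s < 1 ->
  rint t s (fun x => B * (polyP c (S m) s x * polyP c m t x) * jacobi al be x)
    (c (S m) m s * h m t - c (S m) m t * h m t).
Proof.
  intros hs. destruct (coef_diff_expansion s hs) as [b [Hb Hint]].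
  assert (E := Hb m (le_n m)).
  rewrite (sum_coef_diag c t hmonic), !coef_below in E by lia.
  replace (c (S m) m s * h m t - c (S m) m t * h m t) with (b m * h m t) by (rewrite <- E; ring).
  apply Hint, le_n.
Qed.

Lemma p1_integrand_close s x : 0 < s < 1 -> INR (S m) * (lip * Rabs (s - t)) <= / 2 ->
  0 <= x <= 1 ->
  Rabs (B * (polyP c (S m) s x * polyP c m t x) * jacobi al be x
        - B * (polyP c (S m) t x * polyP c m t x) * jacobi al be x)
    <= Rabs B * (INR (S m) * (lip * (2 * coef_l1 t (S m)))) * coef_l1 t m * Rabs (s - t).
Proof.
  intros hs Hsmall H01.
  destruct (jacobi_bounds al be ltac:(lra) ltac:(lra) x H01) as [W0 W1].
  replace (B * (polyP c (S m) s x * polyP c m t x) * jacobi al be x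
           - B * (polyP c (S m) t x * polyP c m t x) * jacobi al be x)
    with (B * ((polyP c (S m) s x - polyP c (S m) t x) * polyP c m t x) * jacobi al be x)
    by ring.
  rewrite !Rabs_mult, (Rabs_pos_eq (jacobi al be x)) by lra.
  assert (Z := Rmult_le_compat _ _ _ _ (Rabs_pos _) (Rabs_pos _)
                 (polyP_diff_abs_le s x hs Hsmall H01) (polyP_abs_le t m x H01)).
  assert (HB := Rabs_pos B).
  set (D := Rabs (polyP c (S m) s x - polyP c (S m) t x) * Rabs (polyP c m t x)) in *.
  assert (0 <= D) by (apply Rmult_le_pos; apply Rabs_pos).
  apply Rle_trans with (Rabs B * D).
  - rewrite <- (Rmult_1_r (Rabs B * D)) at 2. apply Rmult_le_compat_l; [nra| lra].
  - eapply Rle_trans; [apply (Rmult_le_compat_l _ _ _ HB Z)| right; ring].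
Qed.

Lemma p1_derivable : derivable_pt_lim (fun s => c (S m) m s) t (rn al be B c h t (S m)).
Proof.
  assert (hm := hpos t ht m). assert (Hlip := lip_nonneg).
  assert (HSm : 0 < INR (S m)) by (apply lt_0_INR; lia).
  destruct (exists_pos_below3 t (1 - t) (/ (2 * INR (S m) * (lip + 1)))) as [d Hd];
    try lra; try (apply Rinv_0_lt_compat; nra).
  assert (Hnear : forall s, Rabs (s - t) < d ->
                    0 < s < 1 /\ INR (S m) * (lip * Rabs (s - t)) <= / 2).
  { intros s Hs. split; [apply Rabs_def2 in Hs; lra|].
    apply Rle_trans with (INR (S m) * ((lip + 1) * / (2 * INR (S m) * (lip + 1)))).
    - apply Rmult_le_compat_l; [lra|]. apply Rmult_le_compat; try lra. apply Rabs_pos.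
    - right. field. lra. }
  set (g := fun x => B * (polyP c (S m) t x * polyP c m t x) * jacobi al be x).
  apply (derivable_pt_lim_ext (fun s => / h m t * (c (S m) m s * h m t)));
    [intros s; field; lra|].
  replace (rn al be B c h t (S m)) with (/ h m t * g t) by (unfold rn, jump, g; field; lra).
  apply (derivable_pt_lim_scal (fun s => c (S m) m s * h m t)).
  apply (derivable_pt_lim_rint _ g
    (fun s x => B * (polyP c (S m) s x * polyP c m t x) * jacobi al be x)
    t (Rabs B * (INR (S m) * (lip * (2 * coef_l1 t (S m)))) * coef_l1 t m) d); try lra.
  - unfold g. continuity_pt_tac; apply polyP_cont || apply jacobi_cont; auto.
  - intros s Hs. apply p1_diff_rint, (Hnear s ltac:(lra)).
  - intros s x Hs Hx. destruct (Hnear s ltac:(lra)) as [hs Hsmall].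
    apply p1_integrand_close; auto. exact (between_unit t s x ht hs Hx).
Qed.

End SubleadingDerivative.

Theorem theorem3p3
  (al be A B : R) (hal : 0 < al) (hbe : 0 < be)
  (hA : 0 <= A) (hAB : 0 <= A + B) (hnz : ~ (A = 0 /\ B = 0))
  (c : nat -> nat -> R -> R) (h : nat -> R -> R)
  (hmonic : forall n s, c n n s = 1)
  (horth : forall s, 0 < s < 1 -> forall i j : nat, i <> j ->
      int01 (fun x => polyP c i s x * polyP c j s x * weight al be A B s x) 0)
  (hh : forall s, 0 < s < 1 -> forall i : nat,
      int01 (fun x => polyP c i s x ^ 2 * weight al be A B s x) (h i s))
  (hpos : forall s, 0 < s < 1 -> forall i : nat, 0 < h i s)
  (t : R) (ht : 0 < t < 1) (n : nat) (hn : (1 <= n)%nat)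
  (an bn : R)
  (hrec : forall x, x * polyP c n t x
            = polyP c (S n) t x + an * polyP c n t x + bn * polyP c (n - 1) t x)
  (I1 I2 : R)
  (hI1 : int01 (fun y => polyP c n t y ^ 2 / (1 - y) * weight al be A B t y) I1)
  (hI2 : int01 (fun y => polyP c n t y * polyP c (n - 1) t y / (1 - y)
                          * weight al be A B t y) I2) :
  let N := INR n in
  let p1 := c n (n - 1)%nat t in
  let rn := B * powr t al * powr (1 - t) be * polyP c n t t * polyP c (n - 1) t t
            / h (n - 1)%nat t in
  let xn := be / h n t * I1 in
  let yn := be / h (n - 1)%nat t * I2 in
  ((2 * N + 2 + al + be) * an
     = 2 * t * rn - 2 * yn - be + (2 * N + 1 + al + be) * t + (1 - t) * xn
   /\ 2 * t * rn - 2 * yn - be + (2 * N + 1 + al + be) * t + (1 - t) * xn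
     = 2 * p1 - be + (2 * N + 1 + al + be) * t + (1 - t) * xn)
  /\
  exists dp1 : R,
    derivable_pt_lim (fun s => c n (n - 1)%nat s) t dp1 /\
    (2 * N - 1 + al + be) * (2 * N + 1 + al + be) * bn
      = (yn - t * rn) ^ 2 + (2 * N + al) * t * rn
        + (be - (2 * N + al + be) * t) * yn + N * (N + al) * t /\
    (yn - t * rn) ^ 2 + (2 * N + al) * t * rn
        + (be - (2 * N + al + be) * t) * yn + N * (N + al) * t
      = p1 ^ 2 + (2 * N + al) * p1 + (2 * N + al + be) * (1 - t) * yn
        + N * (N + al) * t /\
    p1 ^ 2 + (2 * N + al) * p1 + (2 * N + al + be) * (1 - t) * yn
        + N * (N + al) * t
      = p1 ^ 2 + (- be + (2 * N + al + be) * t) * p1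
        + (2 * N + al + be) * t * (1 - t) * dp1 + N * (N + al) * t.
Proof.
  destruct n as [|m]; [lia|]. replace (S m - 1)%nat with m in * by lia. cbv zeta.
  assert (Hm := hpos t ht m). assert (HSm := hpos t ht (S m)).
  destruct (recurrence_coef_unique al be A B c h hmonic t (horth t ht) (hh t ht) (hpos t ht)
              m an bn hrec) as [-> ->].
  assert (Hx := xn_eq al be A B hal hbe c h hmonic t ht (horth t ht) (hh t ht) (hpos t ht)
                (S m) I1 hI1).
  assert (Hy := yn_eq al be A B hal hbe c h hmonic t ht (horth t ht) (hh t ht) (hpos t ht)
                m I2 hI2).
  assert (Ha := alpha_rec_eq al be A B hal hbe c h hmonic t ht (horth t ht) (hh t ht)
                (hpos t ht) (S m)).
  assert (Hb := beta_rec_eq al be A B hal hbe c h hmonic t ht (horth t ht) (hh t ht)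
                (hpos t ht) (S m)).
  assert (Hr : B * powr t al * powr (1 - t) be * polyP c (S m) t t * polyP c m t t / h m t
               = rn al be B c h t (S m)) by (unfold rn, jump, jacobi; field; lra).
  rewrite Hr, Hx, Hy. change (c (S m) m t) with (p1 c t (S m)).
  unfold alpha_rec in *. rewrite S_INR in *.
  split; [split; lra|].
  exists (rn al be B c h t (S m)). repeat split; try ring.
  - apply (p1_derivable al be A B hal hbe c h hmonic horth hh hpos t ht m).
  - rewrite Hb. ring.
Qed.
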